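(* Let $p(x,y)$ be a real polynomial and $A\in\mathbb{N}_0^2$ such that the exponent vectors $k$ of the terms of $p$ take exactly two distinct values $B_1^A<B_2^A$ of $\langle A,k\rangle$, i.e. $p=\varphi_1^A+\varphi_2^A$ where $\varphi_j^A$ is the sum of the terms of $p$ with $\langle A,k\rangle=B_j^A$. Then there is no $\bar A\in\mathbb{N}_0^2$ with $\bar A\neq A$ such that the main $\bar A$-quasi-homogeneous form of $p$ contains more than two terms.
   Context: $\mathbb{N}=\{1,2,\dots\}$; $\mathbb{N}_0^2$ is the set of $(A_1,A_2)\in\mathbb{N}^2$ with $\gcd(A_1,A_2)=1$. The main $\bar A$-quasi-homogeneous form of $p$ is the sum of the terms of $p$ whose exponent vectors $k$ minimize $\langle\bar A,k\rangle$ over the set of exponent vectors of terms of $p$ with nonzero coefficients. *)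

From HB Require Import structures.
From mathcomp Require Import all_boot all_order all_algebra.
From mathcomp Require Import multinomials.mpoly.
Set Implicit Arguments. Unset Strict Implicit. Unset Printing Implicit Defensive.
Import Order.TTheory GRing.Theory Num.Theory.

(* Bivariate polynomials p(x,y) are elements of {mpoly R[2]}; a monomial
   k : 'X_{1..2} has exponents k 0 (of x) and k 1 (of y). *)
Definition i0 : 'I_2 := @Ordinal 2 0 isT.
Definition i1 : 'I_2 := @Ordinal 2 1 isT.

(* N_0^2 : pairs (A1,A2) of positive naturals with gcd 1 *)
Definition inN02 (A : nat * nat) : bool :=
  [&& 0 < A.1, 0 < A.2 & coprime A.1 A.2].

Definition wt (A : nat * nat) (k : 'X_{1..2}) : nat :=
  A.1 * k i0 + A.2 * k i1.

Definition exps (R : realFieldType) (p : {mpoly R[2]}) : seq 'X_{1..2} :=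
  msupp p.

Definition main_form_exps (R : realFieldType) (Abar : nat * nat)
    (p : {mpoly R[2]}) : seq 'X_{1..2} :=
  [seq k <- exps p | all (fun k' => wt Abar k <= wt Abar k') (exps p)].

From HB Require Import structures.
From mathcomp Require Import all_boot all_order all_algebra.
From mathcomp Require Import multinomials.mpoly.
From mathcomp Require Import ring.

Set Implicit Arguments.
Unset Strict Implicit.
Unset Printing Implicit Defensive.
Import GRing.Theory.

(* All exponents of the main Abar-form share one Abar-weight, and p takes only
   two A-weights.  Two distinct exponents with equal A- and Abar-weights would
   make the 2x2 system (A; Abar) singular, so A and Abar would be proportional,
   hence equal as primitive positive vectors.  Thus k |-> <A,k> is injective on
   the main Abar-form and its image lies in {B1, B2}. *)

Lemma mnm2P (k k' : 'X_{1..2}) : k i0 = k' i0 -> k i1 = k' i1 -> k = k'.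
Proof.
move=> h0 h1; apply/mnmP => -[[|[|//]] lti].
- by rewrite (_ : Ordinal lti = i0) //; apply: val_inj.
- by rewrite (_ : Ordinal lti = i1) //; apply: val_inj.
Qed.

Section Determinant.
Local Open Scope ring_scope.

Lemma det2_eq0 (R : idomainType) (a1 a2 b1 b2 x y : R) :
  a1 * x + a2 * y = 0 -> b1 * x + b2 * y = 0 -> (x != 0) || (y != 0) ->
  a1 * b2 = a2 * b1.
Proof.
move=> eqa eqb nz_xy; apply/eqP; rewrite -subr_eq0.
have det_x : (a1 * b2 - a2 * b1) * x
             = b2 * (a1 * x + a2 * y) - a2 * (b1 * x + b2 * y) by ring.
have det_y : (a1 * b2 - a2 * b1) * y
             = a1 * (b1 * x + b2 * y) - b1 * (a1 * x + a2 * y) by ring.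
rewrite eqa eqb !mulr0 subr0 in det_x det_y.
by case/orP: nz_xy => /negPf nz;
  [move/eqP: det_x | move/eqP: det_y]; rewrite mulf_eq0 nz orbF.
Qed.

Lemma wt_intE (A : nat * nat) (k : 'X_{1..2}) :
  (wt A k)%:Z = A.1%:Z * (k i0)%:Z + A.2%:Z * (k i1)%:Z.
Proof. by rewrite /wt PoszD !PoszM. Qed.

Lemma wt_cross_eq (A B : nat * nat) (k k' : 'X_{1..2}) :
  k != k' -> wt A k = wt A k' -> wt B k = wt B k' -> (A.1 * B.2 = A.2 * B.1)%N.
Proof.
move=> neq_kk' eqA eqB.
have wt_diff_eq0 (C : nat * nat) : wt C k = wt C k' ->
    C.1%:Z * ((k i0)%:Z - (k' i0)%:Z) + C.2%:Z * ((k i1)%:Z - (k' i1)%:Z) = 0.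
  move=> /(congr1 Posz); rewrite !wt_intE => /eqP; rewrite -subr_eq0 => /eqP <-.
  ring.
apply/eqP; rewrite -eqz_nat !PoszM; apply/eqP.
apply: det2_eq0 (wt_diff_eq0 _ eqA) (wt_diff_eq0 _ eqB) _.
apply: contraR neq_kk'; rewrite negb_or !negbK !subr_eq0 => /andP[/eqP e0 /eqP e1].
by apply/eqP/mnm2P; case: e0; case: e1.
Qed.

End Determinant.

Lemma inN02_cross_eq (A B : nat * nat) :
  inN02 A -> inN02 B -> A.1 * B.2 = A.2 * B.1 -> A = B.
Proof.
case: A B => [a1 a2] [b1 b2] /and3P[/= a1_gt0 _ co_a] /and3P[/= _ _ co_b] /= cross.
have a1_dvd_b1 : a1 %| b1 by rewrite -(Gauss_dvdr _ co_a) -cross dvdn_mulr.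
have b1_dvd_a1 : b1 %| a1 by rewrite -(Gauss_dvdl _ co_b) cross dvdn_mull.
have eq1 : a1 = b1 by apply/eqP; rewrite eqn_dvd a1_dvd_b1 b1_dvd_a1.
subst b1; congr (_, _); apply/eqP.
by rewrite -(eqn_pmul2l a1_gt0) cross mulnC.
Qed.

Lemma wt_inj2 (A B : nat * nat) (k k' : 'X_{1..2}) :
  inN02 A -> inN02 B -> B <> A ->
  wt A k = wt A k' -> wt B k = wt B k' -> k = k'.
Proof.
move=> A_N02 B_N02 neq_BA eqA eqB; apply/eqP; apply: contraT => neq_kk'.
by case: neq_BA; apply/esym/inN02_cross_eq => //; exact: wt_cross_eq neq_kk' eqA eqB.
Qed.

Section MainForm.
Variables (R : realFieldType) (Abar : nat * nat) (p : {mpoly R[2]}).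

Lemma main_form_exps_uniq : uniq (main_form_exps Abar p).
Proof. exact/filter_uniq/msupp_uniq. Qed.

Lemma main_form_exps_sub : {subset main_form_exps Abar p <= exps p}.
Proof. by move=> k; rewrite mem_filter => /andP[]. Qed.

Lemma main_form_exps_wt (k k' : 'X_{1..2}) :
  k \in main_form_exps Abar p -> k' \in main_form_exps Abar p ->
  wt Abar k = wt Abar k'.
Proof.
rewrite !mem_filter => /andP[/allP min_k k_p] /andP[/allP min_k' k'_p].
by apply/eqP; rewrite eqn_leq min_k // min_k'.
Qed.

End MainForm.

Theorem mainTheorem13 (R : realFieldType) (p : {mpoly R[2]}) (A : nat * nat)
  (B1 B2 : nat) :
  inN02 A ->
  B1 < B2 ->
  (exists2 k, k \in exps p & wt A k = B1) ->
  (exists2 k, k \in exps p & wt A k = B2) ->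
  (forall k, k \in exps p -> wt A k = B1 \/ wt A k = B2) ->
  forall Abar : nat * nat, inN02 Abar -> Abar <> A ->
    size (main_form_exps Abar p) <= 2.
Proof.
move=> A_N02 _ _ _ two_wts Abar Abar_N02 neq_AbarA.
have wtA_inj : {in main_form_exps Abar p &, injective (wt A)}.
  move=> k k' k_main k'_main eqA.
  exact: wt_inj2 A_N02 Abar_N02 neq_AbarA eqA (main_form_exps_wt k_main k'_main).
rewrite -(size_map (wt A)) -[2]/(size [:: B1; B2]).
apply: uniq_leq_size; first by rewrite map_inj_in_uniq ?main_form_exps_uniq.
move=> _ /mapP[k /main_form_exps_sub k_p ->].
by rewrite !inE; case: (two_wts k k_p) => ->; rewrite eqxx ?orbT.
Qed.
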